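(* Let $C$ be a cycle and $P$ a path (in some graph) such that $C\cup P$ is the exceptional graph. Then $C$ has length $5$, $V(C)\subseteq V(P)$, and the subgraph of $C\cup P$ induced by $V(C)$ is isomorphic to $K_5^-$.
   Context: $K_5^-$ is $K_5$ minus one edge. The exceptional graph is a graph that is the union of an edge-disjoint cycle $C_0$ of length $5$ and path $P_0$ such that $V(C_0)\subseteq V(P_0)$ and $V(C_0)$ induces a $K_5^-$ in $C_0\cup P_0$. ''$C\cup P$ is the exceptional graph'' means that the graph with edge set $E(C)\cup E(P)$ ($C,P$ edge-disjoint) is isomorphic to the exceptional graph. *)

From mathcomp Require Import all_boot.

Set Implicit Arguments. Unset Strict Implicit. Unset Printing Implicit Defensive.

(* Graphs are given by their edge sets: an edge is a 2-element set {x,y} of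
   vertices of an ambient finite vertex type T. *)
Section Graphs.
Variable T : finType.

Definition pedges (s : seq T) : {set {set T}} :=
  [set [set pq.1; pq.2] | pq in zip s (behead s)].

Definition cedges (s : seq T) : {set {set T}} := pedges (s ++ take 1 s).

Definition is_path (s : seq T) : bool := uniq s && (0 < size s).

(* A cycle: at least 3 distinct vertices, closed up. Its length is size s. *)
Definition is_cycle (s : seq T) : bool := uniq s && (2 < size s).

Definition induces_K5minus (V : {set T}) (E : {set {set T}}) : Prop :=
  #|V| = 5 /\
  exists u v, [/\ u \in V, v \in V, u != v &
    [set e in E | e \subset V] =
    [set e : {set T} | [&& e \subset V, #|e| == 2 & e != [set u; v]]]].

Definition exceptional (E : {set {set T}}) : Prop :=
  exists c0 p0 : seq T,
    [/\ is_cycle c0 /\ size c0 = 5, is_path p0,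
        [disjoint cedges c0 & pedges p0],
        E = cedges c0 :|: pedges p0 &
        {subset c0 <= p0} /\ induces_K5minus [set x in c0] E].

End Graphs.

From mathcomp Require Import all_boot zify.

Set Implicit Arguments. Unset Strict Implicit. Unset Printing Implicit Defensive.

(* Let V be the vertex set of the K_5^- spanned by C_0. Each vertex of V has
   degree at least 3 in C u P, whereas C and P each give degree at most 2, so V
   lies on both C and P. At most 5 of the 9 edges of K_5^- belong to C_0, so
   the path P_0 has at least |V| - 1 edges inside V: V is a segment of P_0.
   An edge of C leaving V must be an edge of P_0, so every vertex of C outside
   V has C-neighbours just before and just after it on P_0. Then the last such
   vertex along P_0 is followed by a vertex of V, and the first one is preceded
   by a vertex of V; the last one lies between these two, hence in V. So
   V(C) = V and C has length 5. *)

Lemma nth_index_map_uniq (S R : eqType) (f g : S -> R) (s : seq S) (x : S) (y0 : R) :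
  uniq (map f s) -> x \in s -> nth y0 (map g s) (index (f x) (map f s)) = g x.
Proof.
move=> uf xs; set i := index x s; have lt_is : i < size s by rewrite index_mem.
have -> : index (f x) (map f s) = i.
  by rewrite -{1}(nth_index x xs) -(nth_map x y0) // index_uniq // size_map.
by rewrite (nth_map x) // nth_index.
Qed.

Section Edges.
Variable T : finType.
Implicit Types (s c : seq T) (x y : T) (V : {set T}) (E : {set {set T}}).

Definition nbrs E x : {set T} := [set y | [set x; y] \in E].

Lemma set2_eq_swap x y a b :
  [set x; y] = [set a; b] -> (x = a /\ y = b) \/ (x = b /\ y = a).
Proof.
move=> e; have /set2P[xa|xb] : x \in [set a; b] by rewrite -e set21.
all: have /set2P[ya|yb] : y \in [set a; b] by rewrite -e set22.
all: have /set2P[ax|ay] : a \in [set x; y] by rewrite e set21.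
all: have /set2P[bx|by'] : b \in [set x; y] by rewrite e set22.
all: subst; tauto.
Qed.

Lemma card_nbrs_zip_le2 (z : seq (T * T)) x :
  uniq (unzip1 z) -> uniq (unzip2 z) ->
  #|nbrs [set [set pq.1; pq.2] | pq in z] x| <= 2.
Proof.
move=> u1 u2.
set a := nth x (unzip2 z) (index x (unzip1 z)).
set b := nth x (unzip1 z) (index x (unzip2 z)).
apply: (@leq_trans #|[set a; b]|); last by rewrite cards2; case: (a != b).
apply/subset_leq_card/subsetP => y; rewrite !inE /a /b.
case/imsetP=> -[p q] zpq /= /set2_eq_swap[[-> ->]|[-> ->]].
  by rewrite (@nth_index_map_uniq _ _ fst snd z (p, q) p u1 zpq) eqxx.
by rewrite (@nth_index_map_uniq _ _ snd fst z (p, q) q u2 zpq) eqxx orbT.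
Qed.

Lemma unzip1_zip_take (S R : Type) (s : seq S) (t : seq R) :
  unzip1 (zip s t) = take (size t) s.
Proof. by elim: s t => [|x s IHs] [|y t] //=; rewrite IHs. Qed.

Lemma card_nbrs_pedges s x : uniq s -> #|nbrs (pedges s) x| <= 2.
Proof.
case: s => [|y s] us; apply: card_nbrs_zip_le2 => //=.
  by rewrite unzip1_zip_take take_uniq.
by rewrite unzip2_zip //; case/andP: us.
Qed.

Lemma card_nbrs_cedges c x : uniq c -> #|nbrs (cedges c) x| <= 2.
Proof.
case: c => [|y c] uc; apply: card_nbrs_zip_le2 => //=; rewrite !take0.
  by rewrite unzip1_zip_take size_cat addn1 /= take_size_cat.
rewrite unzip2_zip; first by rewrite cats1 rcons_uniq.
by rewrite /= size_cat addn1 ltnS leqnSn.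
Qed.

Lemma pedges_cons x y s : pedges [:: x, y & s] = [set x; y] |: pedges (y :: s).
Proof.
apply/setP=> e; rewrite /pedges /= in_setU1; apply/imsetP/predU1P => [[pq]|].
  by rewrite inE => /predU1P[-> -> | zpq ->]; [left | right; apply: imset_f].
case=> [-> | /imsetP[pq zpq ->]]; [exists (x, y) | exists pq] => //.
  by rewrite inE eqxx.
by rewrite inE zpq orbT.
Qed.

Lemma pedges_path x s : path (fun a b => [set a; b] \in pedges (x :: s)) x s.
Proof.
elim: s x => //= y s IHs x; rewrite pedges_cons setU11 /=.
by apply: sub_path (IHs y) => a b ab; rewrite inE ab orbT.
Qed.

Lemma cedges_cycle c : cycle (fun a b => [set a; b] \in cedges c) c.
Proof. by case: c => // a r; rewrite /cedges /= take0 cats1; apply: pedges_path. Qed.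

Lemma next_neq_prev c x : uniq c -> 2 < size c -> x \in c -> next c x != prev c x.
Proof.
move=> uc c3 /rot_to[i q rot_c].
have uq : uniq (x :: q) by rewrite -rot_c rot_uniq.
have : 2 < size (x :: q) by rewrite -rot_c size_rot.
rewrite -(next_rot i uc) -(prev_rot i uc) rot_c.
case: q uq {rot_c} => [|y [|z q]] // /and3P[xNyzq yNzq _] _.
rewrite prev_nth mem_head (memNindex xNyzq) /= eqxx.
apply: contraNneq yNzq => ->; rewrite -[size q]/((size (z :: q)).-1) nth_last /=.
exact: mem_last.
Qed.

Lemma size_zip_behead s : size (zip s (behead s)) = (size s).-1.
Proof. by rewrite size_zip size_behead; apply/minn_idPr/leq_pred. Qed.

Lemma pedgesP x0 s e :
  reflect (exists2 k, k.+1 < size s & e = [set nth x0 s k; nth x0 s k.+1])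
          (e \in pedges s).
Proof.
apply: (iffP imsetP) => [[pq zpq ->] | [k lt_ks ->]].
  have [k + <-] := nthP (x0, x0) zpq; rewrite size_zip_behead ltn_predRL => lt_ks.
  by exists k; rewrite // nth_zip_cond size_zip_behead ltn_predRL lt_ks nth_behead.
exists (nth x0 s k, nth x0 s k.+1) => //.
have -> : (nth x0 s k, nth x0 s k.+1) = nth (x0, x0) (zip s (behead s)) k.
  by rewrite nth_zip_cond size_zip_behead ltn_predRL lt_ks nth_behead.
by rewrite mem_nth // size_zip_behead ltn_predRL.
Qed.

Lemma pedges_sub s e : e \in pedges s -> e \subset [set x in s].
Proof.
case/imsetP=> -[a b] zab ->; apply/subsetP => y /set2P[]->; rewrite inE /=.
  have : a \in unzip1 (zip s (behead s)) := map_f fst zab.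
  by rewrite unzip1_zip_take => /mem_take.
have : b \in unzip2 (zip s (behead s)) := map_f snd zab.
by rewrite unzip2_zip ?size_behead ?leq_pred // => /mem_behead.
Qed.

Lemma cedges_sub c e : e \in cedges c -> e \subset [set x in c].
Proof.
move/pedges_sub/subset_trans; apply; apply/subsetP => x.
by rewrite !inE mem_cat => /orP[// | /mem_take].
Qed.

Lemma pedges_index s x y : uniq s -> [set x; y] \in pedges s ->
  [/\ x \in s, y \in s & (index x s).+1 = index y s \/ (index y s).+1 = index x s].
Proof.
move=> us /(pedgesP x)[k lt_ks].
have lt_k := ltnW lt_ks; have := index_uniq x lt_k us; have := index_uniq x lt_ks us.
have := mem_nth x lt_k; have := mem_nth x lt_ks.
move: (nth x s k) (nth x s k.+1) => a b b_s a_s ib ia /set2_eq_swap.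
by case=> -[-> ->]; split=> //; rewrite ia ib; [left | right].
Qed.

Definition convex_in s V :=
  {in V &, forall a b x, x \in s -> index a s <= index x s <= index b s -> x \in V}.

Lemma pedges_succ_mem s V x0 : uniq s -> {subset V <= s} ->
    #|V| <= #|[set e in pedges s | e \subset V]|.+1 ->
  {in V &, forall y z, index y s < index z s -> nth x0 s (index y s).+1 \in V}.
Proof.
(* Count the edges inside V by their lower endpoints: only the last vertex of
   V can lack a successor in V. *)
move=> us sVs cardV y z yV zV lt_yz; set succ := fun x => nth x0 s (index x s).+1.
set K := [set x in V | ((index x s).+1 < size s) && (succ x \in V)].
have [xM xMV maxM] : {xM | xM \in V & {in V, forall x, index x s <= index xM s}}.
  by exists [arg max_(x > y in V) index x s]; case: arg_maxnP.
have sub_edges : [set e in pedges s | e \subset V] \subset [set [set x; succ x] | x in K].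
  apply/subsetP => e; rewrite inE => /andP[/(pedgesP x0)[k lt_ks ->]].
  rewrite subUset !sub1set => /andP[kV k1V]; have lt_k := ltnW lt_ks.
  apply/imsetP; exists (nth x0 s k); last by rewrite /succ index_uniq.
  by rewrite inE /succ index_uniq ?kV ?lt_ks.
have sub_K : K \subset V :\ xM.
  apply/subsetP => x; rewrite !inE => /and3P[xV lt_xs sxV]; rewrite xV andbT.
  by apply: contraTneq (maxM _ sxV) => <-; rewrite -ltnNge /succ index_uniq.
have eK : K = V :\ xM.
  apply/eqP; rewrite eqEcard sub_K -ltnS.
  have := cardsD1 xM V; rewrite xMV add1n => <-.
  apply: leq_trans cardV _; rewrite ltnS.
  exact: leq_trans (subset_leq_card sub_edges) (leq_imset_card _ _).
have : y \in K.
  by rewrite eK !inE yV andbT; apply: contraTneq lt_yz => ->; rewrite -leqNgt maxM.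
by rewrite inE => /and3P[].
Qed.

Lemma pedges_convex s V : uniq s -> {subset V <= s} ->
  #|V| <= #|[set e in pedges s | e \subset V]|.+1 -> convex_in s V.
Proof.
move=> us sVs cardV a b aV bV x xs /andP[le_ax le_xb].
have lt_bs : index b s < size s by rewrite index_mem sVs.
suff mem_d d : index a s + d <= index b s -> nth a s (index a s + d) \in V.
  by rewrite -(nth_index a xs) -(subnKC le_ax) mem_d ?subnKC.
elim: d => [|d IHd] le_db; first by rewrite addn0 nth_index ?sVs.
have lt_db : index a s + d < index b s by rewrite -addnS.
have iy : index (nth a s (index a s + d)) s = index a s + d.
  by rewrite index_uniq // (ltn_trans lt_db).
rewrite addnS -iy; apply: (pedges_succ_mem a us sVs cardV (IHd (ltnW lt_db)) bV).
by rewrite iy.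
Qed.

Section CycleInConvex.
Variables (c s : seq T) (V : {set T}).
Hypotheses (uc : uniq c) (c3 : 2 < size c) (us : uniq s) (convV : convex_in s V).
Hypothesis out_pedges :
  {in cedges c, forall e : {set T}, ~~ (e \subset V) -> e \in pedges s}.

Lemma cycle_out_index w : w \in c -> w \notin V ->
  [/\ w \in s, exists2 u, u \in c & index u s = (index w s).+1
             & exists2 d, d \in c & (index d s).+1 = index w s].
Proof.
move=> wc wV; have out e : e \in cedges c -> w \in e -> e \in pedges s.
  by move=> ce we; apply: out_pedges ce _; apply: contra wV => /subsetP; apply.
have /(pedges_index us)[ws ns ihn] : [set w; next c w] \in pedges s.
  exact: out (next_cycle (cedges_cycle c) wc) (set21 _ _).
have /(pedges_index us)[_ ps ihp] : [set w; prev c w] \in pedges s.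
  by rewrite setUC; apply: out (prev_cycle (cedges_cycle c) wc) (set22 _ _).
have neq : index (next c w) s != index (prev c w) s.
  by apply: contra (next_neq_prev uc c3 wc) => /eqP/(index_inj w ns ps)->.
have [nc pc] : next c w \in c /\ prev c w \in c by rewrite mem_next mem_prev.
case: ihn ihp neq => [hn|hn] [hp|hp]; first by rewrite -hn -hp eqxx.
- by split=> //; [exists (next c w) | exists (prev c w)].
- by split=> //; [exists (prev c w) | exists (next c w)].
- by rewrite -eqSS hn hp eqxx.
Qed.

Lemma cycle_sub_convex : {subset c <= V}.
Proof.
move=> w0 w0c; apply/contraT => w0V; set W := [set w in c | w \notin V].
have w0W : w0 \in W by rewrite inE w0c.
have [wM wMW maxM] : {wM | wM \in W & {in W, forall w, index w s <= index wM s}}.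
  by exists [arg max_(w > w0 in W) index w s]; case: arg_maxnP.
have [wm wmW minm] : {wm | wm \in W & {in W, forall w, index wm s <= index w s}}.
  by exists [arg min_(w < w0 in W) index w s]; case: arg_minnP.
move: (wMW) (wmW); rewrite !inE => /andP[wMc wMV] /andP[wmc wmV].
have [wMs [u uc' iu] _] := cycle_out_index wMc wMV.
have [_ _ [d dc id]] := cycle_out_index wmc wmV.
have uV : u \in V.
  apply/contraT => uNV; suff : index u s <= index wM s by rewrite iu ltnn.
  by apply: maxM; rewrite inE uc'.
have dV : d \in V.
  apply/contraT => dNV; suff : index wm s <= index d s by rewrite -id ltnn.
  by apply: minm; rewrite inE dc.
suff : wM \in V by rewrite (negbTE wMV).
apply: (convV dV uV wMs); rewrite iu leqnSn andbT.
by apply: leq_trans (minm _ wMW); rewrite -id leqnSn.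
Qed.

End CycleInConvex.

Lemma K5minus_card_edges V E : induces_K5minus V E -> #|[set e in E | e \subset V]| = 9.
Proof.
case=> cV [u [v [uV vV nuv ->]]].
have -> : [set e : {set T} | [&& e \subset V, #|e| == 2 & e != [set u; v]]] =
          [set e : {set T} | e \subset V & #|e| == 2] :\ [set u; v].
  by apply/setP => e; rewrite !inE andbA andbC.
have := cardsD1 [set u; v] [set e : {set T} | e \subset V & #|e| == 2].
by rewrite cards_draws cV inE subUset !sub1set uV vV cards2 nuv => -[].
Qed.

Lemma K5minus_nbrs V E x : induces_K5minus V E -> x \in V -> 2 < #|nbrs E x|.
Proof.
(* z is the only possible non-neighbour of x in V. *)
case=> cV [u [v [uV vV nuv eE]]] xV; set z := if x == u then v else u.
have sub : (V :\ x) :\ z \subset nbrs E x.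
  apply/subsetP => y; rewrite !inE => /and3P[yz yx yV].
  suff : [set x; y] \in [set e in E | e \subset V] by rewrite inE => /andP[].
  rewrite eE inE subUset !sub1set xV yV cards2 (eq_sym x) yx /=.
  apply: contra yz; rewrite /z => /eqP/set2_eq_swap[[-> ->]|[-> ->]].
    by rewrite eqxx.
  by rewrite (eq_sym v) (negbTE nuv).
have := cardsD1 x V; have := cardsD1 z (V :\ x); rewrite xV cV.
by move: (subset_leq_card sub); case: (z \in V :\ x); lia.
Qed.

Lemma nbrsU_out E (F : {set {set T}}) (S : {set T}) x :
  {in E, forall e : {set T}, e \subset S} -> x \notin S -> nbrs (E :|: F) x = nbrs F x.
Proof.
move=> ES xS; apply/setP => y; rewrite !inE.
suff /negbTE-> : [set x; y] \notin E by [].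
by apply: contra xS => /ES/subsetP; apply; apply: set21.
Qed.

Lemma nbrs_gt2_mem c p x : uniq c -> uniq p ->
  2 < #|nbrs (cedges c :|: pedges p) x| -> x \in c /\ x \in p.
Proof.
move=> uc up deg; split; apply/contraT => xN; move: deg.
  by rewrite (nbrsU_out _ (@cedges_sub c)) ?inE // ltnNge card_nbrs_pedges.
by rewrite setUC (nbrsU_out _ (@pedges_sub p)) ?inE // ltnNge card_nbrs_cedges.
Qed.

Lemma card_cedges c : #|cedges c| <= size c.
Proof.
apply: leq_trans (leq_imset_card _ _) _; apply: leq_trans (card_size _) _.
by case: c => // a r; rewrite size_zip_behead /= take0 size_cat addn1.
Qed.

End Edges.

Theorem mainTheorem7 (T : finType) (c p : seq T) :
  is_cycle c -> is_path p -> [disjoint cedges c & pedges p] ->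
  exceptional (cedges c :|: pedges p) ->
  [/\ size c = 5, {subset c <= p} &
      induces_K5minus [set x in c] (cedges c :|: pedges p)].
Proof.
move=> /andP[uc c3] /andP[up _] _ [c0 [p0 [[_ sc0] /andP[up0 _] _ eE [c0p0 K]]]].
set V := [set x in c0] in K; have [cardV _] := K.
have Vcp x : x \in V -> x \in c /\ x \in p.
  by move=> xV; apply: nbrs_gt2_mem uc up (K5minus_nbrs K xV).
have p0_edges : 4 <= #|[set e in pedges p0 | e \subset V]|.
  have sub : [set e in cedges c :|: pedges p | e \subset V] \subset
             cedges c0 :|: [set e in pedges p0 | e \subset V].
    by apply/subsetP => e; rewrite eE !inE => /andP[/orP[-> | ->] ->]; rewrite ?orbT.
  have := leq_trans (subset_leq_card sub) (leq_card_setU _ _).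
  by rewrite (K5minus_card_edges K); have := card_cedges c0; rewrite sc0; lia.
have convV : convex_in p0 V.
  by apply: pedges_convex => // [x | ]; [rewrite inE => /c0p0 | rewrite cardV].
have sub_cV : {subset c <= V}.
  apply: cycle_sub_convex uc c3 up0 convV _ => e ce eNV.
  have : e \in cedges c0 :|: pedges p0 by rewrite -eE inE ce.
  by rewrite inE => /orP[/cedges_sub eV | //]; rewrite eV in eNV.
have cE : [set x in c] = V.
  by apply/setP => x; rewrite inE; apply/idP/idP => [/sub_cV | /Vcp[]].
rewrite cE; split=> // [| x /sub_cV /Vcp[] //].
by rewrite -(card_uniqP uc) -cardsE cE.
Qed.
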